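(* Let $\mathcal{F}$ be a class of simple graphs closed under subdivisions. Then $\mathcal{F}\subseteq\mathrm{cl}(\mathcal{F}_K)$ for every non-bipartite graph $K$. In particular, $\equiv_{\mathcal{F}}$ admits $K$-cancellation for every non-bipartite graph $K$.
   Context: All graphs are finite, undirected, without multiple edges; simple means without loops. $\hom(F,G)$ counts homomorphisms; $G\equiv_{\mathcal{F}}H$ means $\hom(F,G)=\hom(F,H)$ for all $F\in\mathcal{F}$; $\mathrm{cl}(\mathcal{F})$ is the class of simple graphs $L$ such that for all simple $G,H$, $G\equiv_{\mathcal{F}}H$ implies $\hom(L,G)=\hom(L,H)$. $\mathcal{F}_K=\{F\in\mathcal{F}\mid\hom(F,K)>0\}$. A class is closed under subdivisions if replacing any edge of a member by a path yields a member. $G\times K$ is the categorical product (vertex set $V(G)\times V(K)$, $(g,k)\sim(g',k')$ iff $gg'\in E(G)$ and $kk'\in E(K)$). An equivalence relation $\approx$ on graphs admits $K$-cancellation if $G\times K\approx H\times K$ implies $G\approx H$ for all graphs $G,H$. *)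

From mathcomp Require Import all_boot.
Set Implicit Arguments. Unset Strict Implicit. Unset Printing Implicit Defensive.

(* A finite undirected graph without multiple edges (loops allowed):
   a finite vertex type with a symmetric boolean adjacency relation. *)
Record graph := Graph {
  vert :> finType;
  adj : rel vert;
  adj_sym : symmetric adj }.

Definition simple (G : graph) : Prop := forall x : G, ~~ adj x x.

Definition is_hom (F G : graph) (f : {ffun F -> G}) : bool :=
  [forall x : F, forall y : F, adj x y ==> adj (f x) (f y)].
Definition hom (F G : graph) : nat := #|[pred f : {ffun F -> G} | is_hom f]|.

Definition graph_class := graph -> Prop.

Definition hom_equiv (C : graph_class) (G H : graph) : Prop :=
  forall F, C F -> hom F G = hom F H.

Definition cl (C : graph_class) : graph_class := fun L =>
  simple L /\ forall G H : graph, simple G -> simple H -> hom_equiv C G H -> hom L G = hom L H.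

Definition class_K (C : graph_class) (K : graph) : graph_class := fun F =>
  C F /\ 0 < hom F K.

Definition bipartite (K : graph) : Prop :=
  exists c : K -> bool, forall x y : K, adj x y -> c x != c y.

Definition prod_adj (G K : graph) : rel (G * K)%type :=
  fun a b => adj a.1 b.1 && adj a.2 b.2.
Lemma prod_adj_sym (G K : graph) : symmetric (@prod_adj G K).
Proof. by move=> [g k] [g' k']; rewrite /prod_adj /= adj_sym [adj k _]adj_sym. Qed.
Definition gprod (G K : graph) : graph := Graph (@prod_adj_sym G K).

(* Subdivision: replace the edge {u,v} of F by a path u - w_0 - ... - w_n - v
   with n.+1 new internal vertices (path of length n+2). *)
Definition subdiv_dir (F : graph) (u v : F) (n : nat) : rel (F + 'I_n.+1) :=
  fun a b => match a, b with
  | inl x, inl y => adj x y && ~~ ((x == u) && (y == v)) && ~~ ((x == v) && (y == u))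
  | inl x, inr i => (x == u) && (val i == 0)
  | inr i, inl x => (x == v) && (val i == n)
  | inr i, inr j => val j == (val i).+1
  end.
Definition subdiv_adj (F : graph) (u v : F) (n : nat) : rel (F + 'I_n.+1) :=
  fun a b => @subdiv_dir F u v n a b || @subdiv_dir F u v n b a.
Lemma subdiv_adj_sym (F : graph) (u v : F) (n : nat) : symmetric (@subdiv_adj F u v n).
Proof. by move=> a b; rewrite /subdiv_adj orbC. Qed.
Definition subdivide (F : graph) (u v : F) (n : nat) : graph :=
  Graph (@subdiv_adj_sym F u v n).

Definition closed_under_subdivisions (C : graph_class) : Prop :=
  forall (F : graph) (u v : F) (n : nat), C F -> adj u v -> C (subdivide u v n).

Definition admits_cancellation (R : graph -> graph -> Prop) (K : graph) : Prop :=
  forall G H : graph, R (gprod G K) (gprod H K) -> R G H.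

(* For F in the class, subdividing each edge e of F into a path of length
   l e gives a graph F_l with
     hom(F_l, X) = sum_(f : V(F) -> X) prod_e (A_X ^ l e)_(f e.1, f e.2),
   A_X the adjacency matrix of X; for l = 1 this is hom(F, X).  An odd closed
   walk of length c in K gives closed walks of every odd length >= c, so F_l
   maps to K, i.e. lies in F_K, whenever every l e is odd and >= c, and for
   such l the sums for G and H agree.  A symmetric rational matrix is a linear
   combination of its odd powers of exponent above any given bound, with
   coefficients that can be chosen common to A_G and A_H; the sum being
   multilinear in the matrices attached to the edges, the exponents are
   brought down to 1 one edge at a time.  Cancellation follows from
   hom(F, G x K) = hom(F, G) hom(F, K) and hom(F, K) > 0 for F in F_K. *)

From mathcomp Require Import all_boot all_order all_algebra zify.
Import Order.TTheory GRing.Theory Num.Theory.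
Set Implicit Arguments. Unset Strict Implicit. Unset Printing Implicit Defensive.
Local Open Scope ring_scope.

(** * Odd powers of symmetric matrices *)

Section SymmetricMatrix.
Variable R : realFieldType.

Lemma symmx_mulmx_eq0 n (A Z : 'M[R]_n) :
  A^T = A -> A *m (A *m Z) = 0 -> A *m Z = 0.
Proof.
move=> symA AAZ0; set Y := A *m Z.
have YtY0 : Y^T *m Y = 0 by rewrite trmx_mul symA -mulmxA AAZ0 mulmx0.
apply/matrixP => i j; rewrite [RHS]mxE.
have sq_ge0 k : predT k -> 0 <= Y^T j k * Y k j by rewrite mxE => _; exact: sqr_ge0.
have : \sum_k Y^T j k * Y k j = 0.
  by have := congr1 (fun M : 'M_n => M j j) YtY0; rewrite !mxE.
by move=> /(psumr_eq0P sq_ge0) /(_ i isT) /eqP; rewrite mxE mulf_eq0 orbb => /eqP.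
Qed.

Lemma symmx_mulmx_exp_eq0 n (A Z : 'M[R]_n) k :
  A^T = A -> A ^+ k.+1 *m Z = 0 -> A *m Z = 0.
Proof.
move=> symA; elim: k Z => [|k IHk] Z; first by rewrite expr1.
by rewrite exprSr -mulmxE -mulmxA => /IHk; apply: symmx_mulmx_eq0.
Qed.

(* The factor [X^k] of the characteristic polynomial of [A * A] can be
   dropped: by symmetry, [A^(2k) * q(A * A) = 0] forces [A * q(A * A) = 0]. *)
Lemma symmx_odd_annihilator n (A : 'M[R]_n.+1) : A^T = A ->
  exists2 r : {poly R}, r.[0] != 0 & A * horner_mx (A * A) r = 0.
Proof.
move=> symA.
have [k [r r0_neq0 charE]] := multiplicity_XsubC (char_poly (A * A)) 0.
rewrite monic_neq0 ?char_poly_monic //= in r0_neq0; exists r => //.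
have := Cayley_Hamilton (A * A).
rewrite charE mulrC polyC0 subr0 rmorphM rmorphXn /= horner_mx_X.
rewrite -expr2 -exprM => Ak_r0.
apply: (@symmx_mulmx_exp_eq0 _ _ _ (2 * k)) => //.
by rewrite mulmxE exprS -mulrA Ak_r0 mulr0.
Qed.

(* If [A * r(A * A) = 0] with [r(0) != 0], then [q := 1 - r / r(0)] has no
   constant term and [A * q(A * A) = A], so [A] is a combination of its odd
   powers of exponent at least [2t + 1], with coefficients from [q ^+ t]. *)
Definition odd_expansion (r : {poly R}) (t : nat) : {poly R} :=
  (1 - r.[0]^-1 *: r) ^+ t.

Lemma coef_odd_expansion r t m :
  r.[0] != 0 -> (m < t)%N -> (odd_expansion r t)`_m = 0.
Proof.
move=> r0_neq0 lt_mt.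
have /factor_theorem [q qE] : root (1 - r.[0]^-1 *: r) 0.
  by rewrite /root !hornerE mulVf ?subrr.
by rewrite /odd_expansion qE subr0 exprMn coefMXn lt_mt.
Qed.

Lemma mulr_horner_mx_sqr n (A : 'M[R]_n.+1) (p : {poly R}) :
  A * horner_mx (A * A) p = \sum_(m < size p) p`_m *: A ^+ m.*2.+1.
Proof.
rewrite -{1}[p]coefK poly_def rmorph_sum mulr_sumr; apply: eq_bigr => m _.
rewrite /= horner_mxZ rmorphXn /= horner_mx_X -scalerAr.
by rewrite -expr2 -exprM -exprS mul2n.
Qed.

Lemma horner_mx_odd_expansion n (A : 'M[R]_n.+1) r t :
  r.[0] != 0 -> A * horner_mx (A * A) r = 0 ->
  A * horner_mx (A * A) (odd_expansion r t) = A.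
Proof.
move=> r0_neq0 Ar0; elim: t => [|t IHt]; first by rewrite rmorph1 mulr1.
rewrite /odd_expansion exprSr rmorphM mulrA IHt rmorphB rmorph1 /= horner_mxZ.
by rewrite mulrBr mulr1 -scalerAr Ar0 scaler0 subr0.
Qed.

Lemma symmx_odd_expansion n (A : 'M[R]_n) : A^T = A ->
  exists2 r : {poly R}, r.[0] != 0 & forall s t, s.[0] != 0 ->
    A = \sum_(m < size (odd_expansion (r * s) t))
          (odd_expansion (r * s) t)`_m *: A ^+ m.*2.+1.
Proof.
case: n A => [|n] A symA.
  by exists 1 => [|s t _]; [rewrite hornerC oner_eq0 | apply/matrixP => -[]].
have [r r0_neq0 Ar0] := symmx_odd_annihilator symA; exists r => // s t s0_neq0.
rewrite -mulr_horner_mx_sqr horner_mx_odd_expansion ?hornerM ?mulf_neq0 //.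
by rewrite rmorphM mulrA Ar0 mul0r.
Qed.

End SymmetricMatrix.

(** * Walk counts *)

Definition fjoin (A B T : finType) (g : {ffun A -> T}) (h : {ffun B -> T}) :
  {ffun A + B -> T} := [ffun x => match x with inl a => g a | inr b => h b end].

Lemma sum_ffun_sumType (R : nmodType) (A B T : finType) (F : {ffun A + B -> T} -> R) :
  \sum_f F f = \sum_(g : {ffun A -> T}) \sum_(h : {ffun B -> T}) F (fjoin g h).
Proof.
rewrite pair_big (reindex (fun gh => fjoin gh.1 gh.2)) //.
pose split_ffun (f : {ffun A + B -> T}) :=
  ([ffun a => f (inl a)], [ffun b => f (inr b)]).
exists split_ffun => [[g h] _|f _].
  by congr pair; apply/ffunP => x; rewrite !ffunE.
by apply/ffunP => -[a|b]; rewrite !ffunE.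
Qed.

Definition fcons n (T : finType) (x : T) (h : {ffun 'I_n -> T}) :
  {ffun 'I_n.+1 -> T} :=
  [ffun i => if unlift ord0 i is Some j then h j else x].

Lemma fcons0 n (T : finType) x (h : {ffun 'I_n -> T}) : fcons x h ord0 = x.
Proof. by rewrite ffunE unlift_none. Qed.

Lemma fconsS n (T : finType) x (h : {ffun 'I_n -> T}) j :
  fcons x h (lift ord0 j) = h j.
Proof. by rewrite ffunE liftK. Qed.

Lemma sum_ffun_cons (R : nmodType) n (T : finType) (F : {ffun 'I_n.+1 -> T} -> R) :
  \sum_f F f = \sum_(x : T) \sum_(h : {ffun 'I_n -> T}) F (fcons x h).
Proof.
rewrite pair_big (reindex (fun xh => fcons xh.1 xh.2)) //.
pose uncons_ffun (f : {ffun 'I_n.+1 -> T}) := (f ord0, [ffun j => f (lift ord0 j)]).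
exists uncons_ffun => [[x h] _|f _].
  by rewrite /uncons_ffun fcons0; congr pair; apply/ffunP => j; rewrite ffunE fconsS.
by apply/ffunP => i; rewrite /= ffunE; case: unliftP => [j ->|->]; rewrite ?ffunE.
Qed.

Section Walks.
Variable X : graph.

Definition adjmx : 'M[rat]_#|X| := \matrix_(i, j) (adj (enum_val i) (enum_val j))%:R.

Definition nwalks (k : nat) (p q : X) : rat := (adjmx ^+ k) (enum_rank p) (enum_rank q).

Lemma adjmx_sym : adjmx^T = adjmx.
Proof. by apply/matrixP => i j; rewrite !mxE adj_sym. Qed.

Lemma nwalks0 p : nwalks 0 p p = 1.
Proof. by rewrite /nwalks expr0 mxE eqxx. Qed.

Lemma nwalks1 p q : nwalks 1 p q = (adj p q)%:R.
Proof. by rewrite /nwalks expr1 mxE !enum_rankK. Qed.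

Lemma nwalksS k p q : nwalks k.+1 p q = \sum_y (adj p y)%:R * nwalks k y q.
Proof.
rewrite /nwalks exprS -mulmxE mxE (reindex (@enum_rank X)) /=; last first.
  by exists enum_val => i _; rewrite ?enum_rankK ?enum_valK.
by apply: eq_bigr => y _; rewrite mxE !enum_rankK.
Qed.

Lemma nwalks_ge0 k p q : 0 <= nwalks k p q.
Proof.
elim: k p => [|k IHk] p; first by rewrite /nwalks expr0 mxE ler0n.
by rewrite nwalksS; apply: sumr_ge0 => y _; rewrite mulr_ge0.
Qed.

Lemma nwalksD_ge a b p q r : nwalks a p q * nwalks b q r <= nwalks (a + b) p r.
Proof.
rewrite {3}/nwalks exprD -mulmxE mxE (bigD1 (enum_rank q)) //= lerDl.
by apply: sumr_ge0 => i _; apply: mulr_ge0; rewrite -[i]enum_valK nwalks_ge0.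
Qed.

Definition is_walk n (p : X) (h : {ffun 'I_n.+1 -> X}) (q : X) : bool :=
  [&& adj p (h ord0), adj (h ord_max) q &
      [forall i, forall j : 'I_n.+1, (val j == (val i).+1) ==> adj (h i) (h j)]].

Lemma is_walk_cons n p x (h : {ffun 'I_n.+1 -> X}) q :
  is_walk p (fcons x h) q = adj p x && is_walk x h q.
Proof.
have lift_max : lift ord0 (@ord_max n) = ord_max by apply: val_inj.
rewrite /is_walk fcons0 -lift_max fconsS; case: (adj p x) => //=.
case: (adj (h ord_max) q); rewrite ?andbF //=.
apply/idP/andP => [/forallP steps|[adj_x /forallP steps]].
  split.
    by have /forallP/(_ (lift ord0 ord0)) := steps ord0; rewrite fcons0 fconsS.
  apply/forallP => i; apply/forallP => j.
  by have /forallP/(_ (lift ord0 j)) := steps (lift ord0 i); rewrite !fconsS.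
apply/forallP => i; apply/forallP => j.
case: (unliftP ord0 i) => [i' ->|->]; case: (unliftP ord0 j) => [j' ->|->] //=.
- by rewrite !fconsS eqSS; have /forallP := steps i'.
- apply/implyP => /eqP j0; rewrite fcons0 fconsS (_ : j' = ord0) //.
  by apply: val_inj; move: j0; rewrite /bump leq0n add1n => -[].
Qed.

Lemma sum_is_walk n p q :
  \sum_(h : {ffun 'I_n.+1 -> X}) (is_walk p h q)%:R = nwalks n.+2 p q.
Proof.
elim: n p => [|n IHn] p; rewrite sum_ffun_cons nwalksS; apply: eq_bigr => x _.
  have walk1 (h : {ffun 'I_0 -> X}) : is_walk p (fcons x h) q = adj p x && adj x q.
    rewrite /is_walk; have -> : ord_max = ord0 :> 'I_1 by apply: val_inj.
    rewrite fcons0; case: (adj p x) (adj x q) => [] [] //=.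
    by apply/forallP => i; apply/forallP => j; rewrite !ord1.
  under eq_bigr do rewrite walk1.
  by rewrite sumr_const card_ffun card_ord expn0 nwalks1 -natrM mulnb.
under eq_bigr do rewrite is_walk_cons.
case: (adj p x); first by rewrite mul1r IHn.
by rewrite mul0r big1.
Qed.

End Walks.

Arguments nwalks : clear implicits.

Definition expands_walks (P : {poly rat}) (X : graph) : Prop :=
  forall p q : X, nwalks X 1 p q = \sum_(m < size P) P`_m * nwalks X m.*2.+1 p q.

Lemma common_walks_expansion (G H : graph) t :
  exists2 P : {poly rat}, (forall m, (m < t)%N -> P`_m = 0) &
    expands_walks P G /\ expands_walks P H.
Proof.
have [rG rG0 EG] := symmx_odd_expansion (adjmx_sym G).
have [rH rH0 EH] := symmx_odd_expansion (adjmx_sym H).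
exists (odd_expansion (rG * rH) t) => [m|].
  by apply: coef_odd_expansion; rewrite hornerM mulf_neq0.
split=> p q; rewrite [nwalks _ 1 _ _]/nwalks expr1; last rewrite mulrC.
  rewrite {1}(EG rH t rH0) summxE; apply: eq_bigr => m _; exact: mxE.
rewrite {1}(EH rG t rG0) summxE; apply: eq_bigr => m _; exact: mxE.
Qed.

Section WalkPolynomial.
Variables (F : finType) (es : seq (F * F)).

Definition walk_poly (X : graph) (k : F * F -> nat) : rat :=
  \sum_(f : {ffun F -> X}) \prod_(e <- es) nwalks X (k e) (f e.1) (f e.2).

Lemma eq_walk_poly X k1 k2 : {in es, k1 =1 k2} -> walk_poly X k1 = walk_poly X k2.
Proof. by move=> k12; apply: eq_bigr => f _; apply: eq_big_seq => e /k12 ->. Qed.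

Lemma walk_poly_expand X P k e : uniq es -> e \in es -> expands_walks P X ->
  walk_poly X [eta k with e |-> 1%N] =
  \sum_(m < size P) P`_m * walk_poly X [eta k with e |-> m.*2.+1].
Proof.
move=> uniq_es es_e expP.
have splitE j f : \prod_(e' <- es) nwalks X ([eta k with e |-> j] e') (f e'.1) (f e'.2)
    = nwalks X j (f e.1) (f e.2) *
      \prod_(e' <- es | e' != e) nwalks X (k e') (f e'.1) (f e'.2).
  rewrite (bigD1_seq e) //= eqxx; congr (_ * _).
  by apply: eq_bigr => e' /negbTE /= ->.
rewrite {1}/walk_poly; under eq_bigr do rewrite splitE expP mulr_suml.
rewrite exchange_big; apply: eq_bigr => m _; rewrite mulr_sumr.
by apply: eq_bigr => f _; rewrite splitE mulrA.
Qed.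

Lemma walk_poly_gt0 (K : graph) k (z : K) :
  (forall e, e \in es -> 0 < nwalks K (k e) z z) -> 0 < walk_poly K k.
Proof.
move=> walks_z; rewrite /walk_poly (bigD1 [ffun=> z]) //= ltr_pwDl //.
  by rewrite big_seq prodr_gt0 // => e /walks_z; rewrite !ffunE.
by apply: sumr_ge0 => f _; apply: prodr_ge0 => e _; apply: nwalks_ge0.
Qed.

(* Edges of [R] get length 1, the others the odd length [2 s e + 1]; the
   edges are switched to length 1 one at a time, expanding each switched
   edge into odd lengths at least [2 t + 1] by [common_walks_expansion]. *)
Lemma walk_poly_odd_to_one (G H : graph) t : uniq es ->
  (forall s : F * F -> nat, (forall e, t <= s e)%N ->
     walk_poly G (fun e => (s e).*2.+1) = walk_poly H (fun e => (s e).*2.+1)) ->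
  walk_poly G (fun _ => 1%N) = walk_poly H (fun _ => 1%N).
Proof.
move=> uniq_es odd_eq; have [P P_low [expG expH]] := common_walks_expansion G H t.
pose lengths (R : seq (F * F)) (s : F * F -> nat) e :=
  if e \in R then 1%N else (s e).*2.+1.
suff lengths_eq R : uniq R -> {subset R <= es} -> forall s, (forall e, t <= s e)%N ->
    walk_poly G (lengths R s) = walk_poly H (lengths R s).
  have ones e : e \in es -> lengths es (fun _ => t) e = 1%N by rewrite /lengths => ->.
  by rewrite -!(eq_walk_poly _ ones) lengths_eq.
elim: R => [|e R IHR] /= => [_ _ s /odd_eq|/andP[R'e uniq_R] sub_eRes s s_ge].
  by rewrite -!(@eq_walk_poly _ (fun e => (s e).*2.+1)).
have es_e : e \in es by apply: sub_eRes; rewrite mem_head.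
have lengths_cons : lengths (e :: R) s =1 [eta lengths R s with e |-> 1%N].
  by move=> e'; rewrite /lengths /= in_cons; case: eqP.
rewrite !(eq_walk_poly _ (in1W lengths_cons)).
rewrite (walk_poly_expand _ uniq_es es_e expG) (walk_poly_expand _ uniq_es es_e expH).
apply: eq_bigr => m _.
have [/P_low ->|t_le_m] := ltnP m t; first by rewrite !mul0r.
have lengths_set :
    [eta lengths R s with e |-> m.*2.+1] =1 lengths R [eta s with e |-> nat_of_ord m].
  by move=> e'; rewrite /lengths /=; case: eqP => [->|//]; rewrite (negbTE R'e).
rewrite !(eq_walk_poly _ (in1W lengths_set)) IHR // => [e' Re'|e'].
  by apply: sub_eRes; rewrite in_cons Re' orbT.
by rewrite /=; case: eqP.
Qed.

End WalkPolynomial.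

(** * Homomorphism counts of subdivisions *)

Definition same_edge (T : eqType) (e e' : T * T) : bool :=
  (e == e') || (e == (e'.2, e'.1)).

Definition covers (T : eqType) (L : seq ((T * T) * nat)) (a b : T) : bool :=
  has (fun l => same_edge (a, b) l.1) L.

Definition map_ends (A B : Type) (g : A -> B) (l : (A * A) * nat) : (B * B) * nat :=
  ((g l.1.1, g l.1.2), l.2).

Lemma covers_map_ends (A B : eqType) (g : A -> B) L a b : injective g ->
  covers (map (map_ends g) L) (g a) (g b) = covers L a b.
Proof.
move=> inj_g; rewrite /covers has_map; apply: eq_has => l.
by rewrite /same_edge /= !xpair_eqE !(inj_eq inj_g).
Qed.

Section HomWithWalks.
Variable X : graph.

Definition partial_hom (S : graph) (L : seq ((S * S) * nat)) (f : {ffun S -> X}) :=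
  [forall a, forall b, adj a b ==> covers L a b || adj (f a) (f b)].

(* An entry [((a, b), k)] of [L] marks the edge [ab] as replaced by walks of
   length [k]: it imposes no homomorphism constraint on [f] and contributes
   the factor [nwalks X k (f a) (f b)] instead. *)
Definition hom_with_walks (S : graph) (L : seq ((S * S) * nat)) : rat :=
  \sum_(f : {ffun S -> X}) (partial_hom L f)%:R *
    \prod_(l <- L) nwalks X l.2 (f l.1.1) (f l.1.2).
Arguments hom_with_walks : clear implicits.

Lemma partial_homP (S : graph) L (f : {ffun S -> X}) :
  reflect (forall a b, adj a b -> covers L a b || adj (f a) (f b)) (partial_hom L f).
Proof.
apply: (iffP forallP) => [PH a b|PH a]; first exact: implyP (forallP (PH a) b).
by apply/forallP => b; apply/implyP/PH.
Qed.

Lemma hom_with_walks_nil S : (hom S X)%:R = hom_with_walks S [::].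
Proof.
rewrite /hom -sum1_card natr_sum big_mkcond /=; apply: eq_bigr => f _.
have -> : partial_hom [::] f = is_hom f by [].
by rewrite big_nil mulr1 inE; case: (is_hom f).
Qed.

Lemma hom_with_walks_covering (S : graph) (L : seq ((S * S) * nat)) :
  (forall a b : S, adj a b -> covers L a b) ->
  hom_with_walks S L =
  \sum_(f : {ffun S -> X}) \prod_(l <- L) nwalks X l.2 (f l.1.1) (f l.1.2).
Proof.
move=> covL; apply: eq_bigr => f _; rewrite (_ : partial_hom L f) ?mul1r //.
by apply/forallP => a; apply/forallP => b; apply/implyP => /covL ->.
Qed.

Section Subdivide.
Variables (S : graph) (u v : S) (n : nat).
Local Notation S' := (subdivide u v n).

Lemma subdiv_adj_inl a b :
  subdiv_adj u v (inl a : S') (inl b) = adj a b && ~~ same_edge (a, b) (u, v).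
Proof.
rewrite /subdiv_adj /subdiv_dir /same_edge /= !xpair_eqE [adj b a]adj_sym.
by case: (adj a b) (a == u) (b == v) (a == v) (b == u) => [] [] [] [] [].
Qed.

Lemma covers_map_inl (L : seq ((S * S) * nat)) (a b : S') :
  covers (map (map_ends inl) L) a b =
  if (a, b) is (inl a', inl b') then covers L a' b' else false.
Proof.
case: a b => [a|i] [b|j]; first by apply: covers_map_ends => x y [].
all: rewrite /covers has_map; apply/hasP => -[l _].
all: by rewrite /= /same_edge /= !xpair_eqE /= => // /orP[] /andP[].
Qed.

(* The edges of [S'] at new vertices are exactly the steps of the walk
   [g u, h 0, ..., h n, g v]; the other ones are the edges of [S] but [uv]. *)
Lemma partial_hom_subdivide (L : seq ((S * S) * nat)) g (h : {ffun 'I_n.+1 -> X}) :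
  @partial_hom S' (map (map_ends inl) L) (fjoin g h) =
  partial_hom (rcons L ((u, v), n.+2)) g && is_walk (g u) h (g v).
Proof.
have ord0E (j : 'I_n.+1) : val j = 0%N -> j = ord0 by move=> j0; apply: val_inj.
have ord_maxE (j : 'I_n.+1) : val j = n -> j = ord_max by move=> jn; apply: val_inj.
apply/partial_homP/andP => [PH|[/partial_homP PH /and3P[gu_h0 hn_gv /forallP steps]]].
  split.
    apply/partial_homP => a b ab; rewrite /covers has_rcons.
    case: (boolP (same_edge _ _)) => //= not_uv.
    have := PH (inl a) (inl b); rewrite /= subdiv_adj_inl ab not_uv.
    by rewrite covers_map_inl !ffunE; apply.
  have PH_new (a b : S') : adj a b -> ~~ covers (map (map_ends inl) L) a b ->
      adj (fjoin g h a) (fjoin g h b) by move=> /PH; case: covers.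
  apply/and3P; split.
  - have := PH_new (inl u) (inr ord0); rewrite covers_map_inl !ffunE /=.
    by rewrite /subdiv_adj /subdiv_dir /= eqxx; apply.
  - have := PH_new (inr ord_max) (inl v); rewrite covers_map_inl !ffunE /=.
    by rewrite /subdiv_adj /subdiv_dir /= !eqxx; apply.
  apply/forallP => i; apply/forallP => j; apply/implyP => ij.
  have := PH_new (inr i) (inr j); rewrite covers_map_inl !ffunE /=.
  by rewrite /subdiv_adj /subdiv_dir /= ij; apply.
move=> [a|i] [b|j]; rewrite covers_map_inl !ffunE /=.
- rewrite subdiv_adj_inl => /andP[ab not_uv].
  by have := PH a b ab; rewrite /covers has_rcons (negbTE not_uv).
- rewrite /subdiv_adj /subdiv_dir /= => /orP[] /andP[/eqP-> /eqP].
    by move/ord0E->.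
  by move/ord_maxE->; rewrite adj_sym.
- rewrite /subdiv_adj /subdiv_dir /= => /orP[] /andP[/eqP-> /eqP].
    by move/ord_maxE->.
  by move/ord0E->; rewrite adj_sym.
rewrite /subdiv_adj /subdiv_dir /= => /orP[ij|ji].
  by have /forallP/(_ j)/implyP := steps i; apply.
by rewrite adj_sym; have /forallP/(_ i)/implyP := steps j; apply.
Qed.

Lemma hom_with_walks_subdivide (L : seq ((S * S) * nat)) :
  hom_with_walks S' (map (map_ends inl) L) =
  hom_with_walks S (rcons L ((u, v), n.+2)).
Proof.
rewrite /hom_with_walks sum_ffun_sumType; apply: eq_bigr => g _.
pose walks_g := \prod_(l <- L) nwalks X l.2 (g l.1.1) (g l.1.2).
transitivity (\sum_(h : {ffun 'I_n.+1 -> X})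
    (partial_hom (rcons L ((u, v), n.+2)) g)%:R * walks_g * (is_walk (g u) h (g v))%:R).
  apply: eq_bigr => h _; rewrite partial_hom_subdivide -mulnb natrM mulrAC big_map.
  by congr (_ * _ * _); apply: eq_bigr => l _; rewrite !ffunE.
by rewrite -mulr_sumr sum_is_walk big_rcons /= mulrA.
Qed.

End Subdivide.

End HomWithWalks.

Arguments hom_with_walks : clear implicits.

Record subdivision (F : graph) := Subdivision { sgraph : graph; sembed : F -> sgraph }.

(* Subdivide the edges [(u, v)] of [L] in turn, the edge of label [n] into a
   path with [n.+1] new inner vertices; the last entry of [L] goes first. *)
Fixpoint subdivide_edges (F : graph) (L : seq ((F * F) * nat)) : subdivision F :=
  if L is ((u, v), n) :: L' then
    let D := subdivide_edges L' in
    @Subdivision F (subdivide (sembed D u) (sembed D v) n) (fun x => inl (sembed D x))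
  else @Subdivision F F id.

Section SubdivideEdges.
Variable F : graph.

Lemma sembed_inj (L : seq ((F * F) * nat)) : injective (sembed (subdivide_edges L)).
Proof. by elim: L => [|[[u v] n] L IHL] //= x y [/IHL]. Qed.

Lemma adj_sembed (L : seq ((F * F) * nat)) x y :
  adj (sembed (subdivide_edges L) x) (sembed (subdivide_edges L) y) =
  adj x y && ~~ covers L x y.
Proof.
elim: L => [|[[u v] n] L IHL] /=; first by rewrite andbT.
have same_sembed : same_edge (sembed (subdivide_edges L) x, sembed _ y)
                             (sembed _ u, sembed _ v) = same_edge (x, y) (u, v).
  by rewrite /same_edge /= !xpair_eqE !(inj_eq (@sembed_inj L)).
by rewrite subdiv_adj_inl IHL same_sembed /covers /= negb_or andbAC andbA.
Qed.

Lemma subdivide_edges_closed (C : graph_class) (L : seq ((F * F) * nat)) :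
  closed_under_subdivisions C -> C F ->
  all (fun l => adj l.1.1 l.1.2) L -> pairwise (fun l l' => ~~ same_edge l.1 l'.1) L ->
  C (sgraph (subdivide_edges L)).
Proof.
move=> closedC CF; elim: L => [|[[u v] n] L IHL] //= /andP[uv adjL] /andP[uv_L pwL].
by apply: closedC (IHL adjL pwL) _; rewrite adj_sembed uv /covers -all_predC.
Qed.

Lemma hom_with_walks_subdivide_edges X (L R : seq ((F * F) * nat)) :
  let D := subdivide_edges L in
  hom_with_walks X (sgraph D) (map (map_ends (sembed D)) R) =
  hom_with_walks X F (R ++ [seq (l.1, l.2.+2) | l <- L]).
Proof.
elim: L R => [|[[u v] n] L IHL] R /=.
  by rewrite cats0 (@eq_map _ _ _ id) ?map_id // => -[[]].
by rewrite -cat_rcons -IHL map_rcons -hom_with_walks_subdivide -map_comp.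
Qed.

End SubdivideEdges.

Lemma prodr_natb (R : pzSemiRingType) (T : Type) (s : seq T) (b : pred T) :
  \prod_(x <- s) ((b x)%:R : R) = (all b s)%:R.
Proof. by elim: s => [|x s IHs]; rewrite ?big_nil ?big_cons //= IHs -natrM mulnb. Qed.

Section EdgeList.
Variable F : graph.

Definition edge_list : seq (F * F) :=
  [seq e <- enum {: F * F} | adj e.1 e.2 && (enum_rank e.1 < enum_rank e.2)%N].

Lemma mem_edge_list e :
  (e \in edge_list) = adj e.1 e.2 && (enum_rank e.1 < enum_rank e.2)%N.
Proof. by rewrite mem_filter mem_enum andbT. Qed.

Lemma edge_list_uniq : uniq edge_list.
Proof. exact/filter_uniq/enum_uniq. Qed.

Lemma edge_list_pairwise : pairwise (fun e e' => ~~ same_edge e e') edge_list.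
Proof.
have pw_neq : pairwise [rel e e' | e != e'] edge_list.
  by rewrite -uniq_pairwise edge_list_uniq.
apply: (sub_in_pairwise _ (allss edge_list) pw_neq) => e e'.
rewrite !mem_edge_list /same_edge /= => /andP[_ lt_e] /andP[_ lt_e'] /negbTE->.
by apply: contraTN lt_e => /eqP->; rewrite -leqNgt ltnW.
Qed.

Lemma edge_list_covers : simple F ->
  forall x y, adj x y -> has (same_edge (x, y)) edge_list.
Proof.
move=> simpleF x y xy.
have x_neq_y : x != y by apply: contraTneq xy => ->; apply: simpleF.
have [lt_xy|lt_yx|/val_inj/enum_rank_inj x_eq_y] := ltngtP (enum_rank x) (enum_rank y).
- by apply/hasP; exists (x, y); rewrite ?mem_edge_list ?xy //= /same_edge eqxx.
- apply/hasP; exists (y, x); first by rewrite mem_edge_list /= adj_sym xy.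
  by rewrite /same_edge /= eqxx orbT.
by rewrite x_eq_y eqxx in x_neq_y.
Qed.

Lemma hom_edge_list X : simple F ->
  (hom F X)%:R = walk_poly edge_list X (fun _ => 1%N).
Proof.
move=> simpleF; rewrite hom_with_walks_nil; apply: eq_bigr => f _.
rewrite big_nil mulr1; under eq_bigr do rewrite nwalks1.
rewrite prodr_natb; congr (nat_of_bool _)%:R.
apply/partial_homP/allP => [homf e|all_adj a b].
  by rewrite mem_edge_list => /andP[/homf].
move=> /(edge_list_covers simpleF)/hasP[[x y] /all_adj /= fxy].
by rewrite /same_edge => /orP[] /eqP[-> ->]; rewrite // adj_sym.
Qed.

Lemma hom_subdivide_edge_list X (n : F * F -> nat) : simple F ->
  (hom (sgraph (subdivide_edges [seq (e, n e) | e <- edge_list])) X)%:R =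
  walk_poly edge_list X (fun e => (n e).+2).
Proof.
move=> simpleF; rewrite hom_with_walks_nil.
rewrite -[[::]]/(map (map_ends (sembed _)) [::]) hom_with_walks_subdivide_edges /=.
rewrite -map_comp hom_with_walks_covering; last first.
  by move=> a b /(edge_list_covers simpleF); rewrite /covers has_map.
by apply: eq_bigr => f _; rewrite big_map.
Qed.

End EdgeList.

(** * Odd closed walks and products *)

Section OddClosedWalks.
Variable K : graph.

Lemma nwalks2_gt0 c (z : K) : 0 < nwalks K c.+1 z z -> 0 < nwalks K 2 z z.
Proof.
have [y zy _|no_nbr] := pickP (adj z).
  apply: lt_le_trans (nwalksD_ge 1 1 z y z).
  by rewrite !nwalks1 zy adj_sym zy mulr1 ltr01.
by rewrite nwalksS big1 ?ltxx // => y _; rewrite no_nbr mul0r.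
Qed.

Lemma nwalks_odd_gt0 c (z : K) : odd c -> 0 < nwalks K c z z ->
  forall t, (c./2 <= t)%N -> 0 < nwalks K t.*2.+1 z z.
Proof.
move=> odd_c walks_c t le_ct.
have c_half : c = (c./2).*2.+1 by rewrite -[LHS]odd_double_half odd_c.
have walks2 : 0 < nwalks K 2 z z by move: walks_c; rewrite c_half; apply: nwalks2_gt0.
have -> : t.*2.+1 = (c + (t - c./2).*2)%N by rewrite {2}c_half; lia.
elim: (t - c./2)%N => [|j IHj]; first by rewrite addn0.
rewrite doubleS -addn2 addnA; apply: lt_le_trans (nwalksD_ge _ _ _ z _).
exact: mulr_gt0.
Qed.

Definition cover_adj : rel (K * bool) := fun a b => adj a.1 b.1 && (b.2 == ~~ a.2).

Lemma cover_adj_sym : symmetric cover_adj.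
Proof. by move=> [x a] [y b]; rewrite /cover_adj /= adj_sym; case: a; case: b. Qed.

Lemma path_cover_adj a p : path cover_adj a p ->
  0 < nwalks K (size p) a.1 (last a p).1 /\ (last a p).2 = odd (size p) (+) a.2.
Proof.
elim: p a => [|b p IHp] a /=; first by rewrite nwalks0 ltr01.
case/andP=> /andP[ab /eqP b2] /IHp[walks_p last2]; split.
  apply: lt_le_trans (nwalksD_ge 1 _ _ b.1 _).
  by rewrite nwalks1 ab mul1r.
by rewrite last2 b2; case: (odd _); case: a.2.
Qed.

Lemma connect_cover_adj x y b :
  connect (@adj K) x y -> exists b', connect cover_adj (x, b) (y, b').
Proof.
case/connectP => p + ->; elim: p x b => [|z p IHp] x b /=; first by exists b.
case/andP=> xz /(IHp _ (~~ b))[b' zb']; exists b'.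
by apply: connect_trans zb'; apply: connect1; rewrite /cover_adj /= xz eqxx.
Qed.

(* Colour [x] by whether [(x, false)] is reachable from [(r, false)] in the
   bipartite double cover, [r] being the root of the component of [x]. *)
Lemma nonbipartite_odd_closed_walk :
  ~ bipartite K -> exists z c, odd c /\ 0 < nwalks K c z z.
Proof.
move=> nonbip.
have [/existsP[z /connectP[p path_p lastE]]|/existsPn no_odd] :=
  boolP [exists z, connect cover_adj (z, false) (z, true)].
  have [walks_p parity] := path_cover_adj path_p; rewrite -lastE /= in walks_p parity.
  by exists z, (size p); rewrite -[odd _]addbF -parity.
exfalso; apply: nonbip.
have cover_sym := sym_connect_sym cover_adj_sym.
have adj_sym' : connect_sym (@adj K) := sym_connect_sym (@adj_sym K).
pose root := fingraph.root (@adj K).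
exists (fun x => connect cover_adj (root x, false) (x, false)) => x y xy.
have <- : root x = root y by apply/(fingraph.rootP adj_sym')/connect1.
set r := root x.
have rx : connect (@adj K) r x by rewrite adj_sym' connect_root.
have step b : cover_adj (x, b) (y, ~~ b) by rewrite /cover_adj /= xy eqxx.
apply/negP => /eqP same_colour.
have [[] rx'] := connect_cover_adj false rx.
  have := connect_trans rx' (connect1 (step true)); rewrite -same_colour => rx_false.
  by have := no_odd x; rewrite (connect_trans _ rx') // cover_sym.
have ry_true := connect_trans rx' (connect1 (step false)).
move: same_colour; rewrite rx' => /esym ry_false.
by have := no_odd y; rewrite (connect_trans _ ry_true) // cover_sym.
Qed.

End OddClosedWalks.

Lemma is_hom_pair (F G K : graph) (g : {ffun F -> G}) (k : {ffun F -> K}) :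
  @is_hom F (gprod G K) [ffun x => (g x, k x)] = is_hom g && is_hom k.
Proof.
apply/forallP/andP => [gk_hom|[/forallP g_hom /forallP k_hom] x].
  split; apply/forallP => x; apply/forallP => y; apply/implyP => xy;
    by have /forallP/(_ y)/implyP/(_ xy) := gk_hom x; rewrite !ffunE => /andP[].
apply/forallP => y; apply/implyP => xy; rewrite !ffunE /= /prod_adj /=.
have /forallP/(_ y)/implyP/(_ xy) -> := g_hom x.
by have /forallP/(_ y)/implyP/(_ xy) := k_hom x.
Qed.

Lemma hom_gprod (F G K : graph) : hom F (gprod G K) = (hom F G * hom F K)%N.
Proof.
have homE (X : graph) : hom F X = (\sum_(f : {ffun F -> X}) is_hom f)%N.
  rewrite /hom -sum1_card big_mkcond; apply: eq_bigr => f _.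
  by rewrite inE; case: is_hom.
rewrite !homE big_distrlr pair_big /=.
pose pair_ffun (gk : {ffun F -> G} * {ffun F -> K}) : {ffun F -> gprod G K} :=
  [ffun x => (gk.1 x, gk.2 x)].
rewrite (reindex pair_ffun) /=.
  by apply: eq_bigr => -[g k] _; rewrite is_hom_pair mulnb.
pose split_ffun (f : {ffun F -> gprod G K}) :=
  ([ffun x => (f x).1], [ffun x => (f x).2]).
exists split_ffun => [[g k]|f] _.
  by congr pair; apply/ffunP => x; rewrite !ffunE.
by apply/ffunP => x; rewrite !ffunE -surjective_pairing.
Qed.

Lemma hom_eq_of_class_K_equiv (C : graph_class) (K : graph) :
  (forall F, C F -> simple F) -> closed_under_subdivisions C -> ~ bipartite K ->
  forall F G H : graph, C F -> hom_equiv (class_K C K) G H -> hom F G = hom F H.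
Proof.
move=> simpleC closedC nonbip F G H CF equivGH; have simpleF := simpleC F CF.
have [z [c [odd_c walks_c]]] := nonbipartite_odd_closed_walk nonbip.
apply/eqP; rewrite -(eqr_nat rat) !hom_edge_list //; apply/eqP.
apply: (walk_poly_odd_to_one (t := c./2.+1) (edge_list_uniq F)) => s le_s.
pose L := [seq (e, (s e).*2.-1) | e <- edge_list F].
have homL X : walk_poly (edge_list F) X (fun e => (s e).*2.+1) =
              (hom (sgraph (subdivide_edges L)) X)%:R.
  rewrite hom_subdivide_edge_list //; apply: eq_walk_poly => e _.
  by have := le_s e; lia.
rewrite !homL equivGH //; split.
  apply: subdivide_edges_closed; rewrite ?pairwise_map ?edge_list_pairwise //.
  by rewrite all_map; apply/allP => e; rewrite mem_edge_list => /andP[].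
rewrite -(ltr0n rat) -homL; apply: (walk_poly_gt0 (z := z)) => e _.
by apply: nwalks_odd_gt0 => //; have := le_s e; lia.
Qed.

Theorem theorem43 (C : graph_class) :
  (forall F, C F -> simple F) ->
  closed_under_subdivisions C ->
  forall K : graph, ~ bipartite K ->
    (forall F, C F -> cl (class_K C K) F) /\
    admits_cancellation (hom_equiv C) K.
Proof.
move=> simpleC closedC K nonbip.
have homE := hom_eq_of_class_K_equiv simpleC closedC nonbip.
split=> [F CF|G H equivGHK F CF].
  by split=> [|G H _ _]; [apply: simpleC | apply: homE].
apply: homE CF _ => F' [CF' homF'K].
by apply/eqP; rewrite -(eqn_pmul2r homF'K) -!hom_gprod equivGHK.
Qed.
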